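(* Let $V$ be a complex normed vector space and $A\subseteq V$ convex. Then $A$ is norm closed if and only if $A$ is s.a.-sequentially closed. In particular, a linear subspace of $V$ is norm closed if and only if it is s.a.-sequentially closed.
   Context: $l^{\infty}(V)$ is the space of bounded sequences $x=\{x_n\}_{n=1}^\infty$ in $V$ with norm $\|x\|_\infty=\sup_n\|x_n\|_V$. For $v\in V$, $\widetilde v=\{v,v,\dots\}$. $T$ is the left shift: $T\{x_1,x_2,\dots\}=\{x_2,x_3,\dots\}$. A Banach limit functional is a bounded linear functional $L$ on $l^\infty(V)$ with $\|L\|\le1$ and $L(Tx)=L(x)$ for all $x$. A sequence $x\in l^\infty(V)$ is strongly almost convergent to $v\in V$ if $L(x)=L(\widetilde v)$ for every Banach limit functional $L$. A set $A\subseteq V$ is s.a.-sequentially closed if whenever $\{x_n\}_{n=1}^\infty$ is a bounded sequence in $A$ that is strongly almost convergent to some $v\in V$, then $v\in A$. *)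

From Stdlib Require Import Reals.
Open Scope R_scope.

Record C : Type := mkC { Re : R ; Im : R }.

Definition C0 : C := mkC 0 0.
Definition C1 : C := mkC 1 0.
Definition RtoC (r : R) : C := mkC r 0.
Definition Cadd (z w : C) : C := mkC (Re z + Re w) (Im z + Im w).
Definition Cmul (z w : C) : C :=
  mkC (Re z * Re w - Im z * Im w) (Re z * Im w + Im z * Re w).
Definition Cmod (z : C) : R := sqrt (Re z * Re z + Im z * Im z).

Record CNormedSpace : Type := {
  vec :> Type ;
  vadd : vec -> vec -> vec ;
  vzero : vec ;
  vopp : vec -> vec ;
  vscal : C -> vec -> vec ;
  vnorm : vec -> R ;
  vadd_assoc : forall x y z, vadd x (vadd y z) = vadd (vadd x y) z ;
  vadd_comm : forall x y, vadd x y = vadd y x ;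
  vadd_0 : forall x, vadd x vzero = x ;
  vadd_opp : forall x, vadd x (vopp x) = vzero ;
  vscal_assoc : forall a b x, vscal a (vscal b x) = vscal (Cmul a b) x ;
  vscal_1 : forall x, vscal C1 x = x ;
  vscal_distr_v : forall a x y, vscal a (vadd x y) = vadd (vscal a x) (vscal a y) ;
  vscal_distr_c : forall a b x, vscal (Cadd a b) x = vadd (vscal a x) (vscal b x) ;
  vnorm_eq0 : forall x, vnorm x = 0 -> x = vzero ;
  vnorm_scal : forall a x, vnorm (vscal a x) = Cmod a * vnorm x ;
  vnorm_triangle : forall x y, vnorm (vadd x y) <= vnorm x + vnorm y
}.

Arguments vadd {_}. Arguments vzero {_}. Arguments vopp {_}.
Arguments vscal {_}. Arguments vnorm {_}.

Section Defs.
Variable V : CNormedSpace.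

Definition vdist (x y : V) : R := vnorm (vadd x (vopp y)).

Definition convex (A : V -> Prop) : Prop :=
  forall x y t, A x -> A y -> 0 <= t <= 1 ->
    A (vadd (vscal (RtoC t) x) (vscal (RtoC (1 - t)) y)).

Definition linear_subspace (A : V -> Prop) : Prop :=
  A vzero /\ (forall x y, A x -> A y -> A (vadd x y)) /\
  (forall a x, A x -> A (vscal a x)).

Definition norm_closed (A : V -> Prop) : Prop :=
  forall v, ~ A v -> exists eps, 0 < eps /\ forall w, vdist w v < eps -> ~ A w.

Definition bounded_seq (x : nat -> V) : Prop :=
  exists M, forall n, vnorm (x n) <= M.

Definition const_seq (v : V) : nat -> V := fun _ => v.

Definition shift (x : nat -> V) : nat -> V := fun n => x (S n).

(* Banach limit functional: a (complex-)linear functional on l^infty(V) with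
   norm <= 1 (|L x| <= ||x||_infty, i.e. <= every bound of the sequence of norms)
   and shift invariant. Only its values on bounded sequences are constrained. *)
Definition banach_limit (L : (nat -> V) -> C) : Prop :=
  (forall x y, bounded_seq x -> bounded_seq y ->
     L (fun n => vadd (x n) (y n)) = Cadd (L x) (L y)) /\
  (forall a x, bounded_seq x -> L (fun n => vscal a (x n)) = Cmul a (L x)) /\
  (forall x M, bounded_seq x -> (forall n, vnorm (x n) <= M) -> Cmod (L x) <= M) /\
  (forall x, bounded_seq x -> L (shift x) = L x).

Definition strongly_almost_convergent (x : nat -> V) (v : V) : Prop :=
  forall L, banach_limit L -> L x = L (const_seq v).

Definition sa_seq_closed (A : V -> Prop) : Prop :=
  forall (x : nat -> V) (v : V), bounded_seq x -> (forall n, A (x n)) ->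
    strongly_almost_convergent x v -> A v.

End Defs.

Arguments convex {_}. Arguments linear_subspace {_}. Arguments norm_closed {_}.
Arguments bounded_seq {_}. Arguments sa_seq_closed {_}.
Arguments strongly_almost_convergent {_}. Arguments banach_limit {_}.

(* (<=) If A is s.a.-sequentially closed and v is a norm limit of points w n of
   A, then w - v~ tends to 0 in norm, so every Banach limit vanishes on it
   (Banach limits ignore finitely many terms and are bounded by the sup norm);
   hence w converges strongly almost to v and v lies in A.

   (=>) Let x be a bounded sequence in A converging strongly almost to v and
   suppose v is outside the closed set A, so at distance >= eps from A.  The
   "upper mean" p(y) = inf_N sup_{m >= N, k} |(y k + ... + y (k+m-1)) / m| is a
   sublinear functional on bounded sequences, bounded by the sup norm and
   vanishing on y - shift y.  Averages of x stay in A by convexity, so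
   p(v~ - x) >= eps.  The Hahn–Banach theorem (proved from the library's Zorn
   lemma) gives a real-linear l <= p with l(v~ - x) = p(v~ - x); its
   complexification l y - i l(i y) is a Banach limit L with Re L(v~ - x) >= eps,
   contradicting L x = L v~.  Linear subspaces are convex, which gives the
   second statement. *)
From Pilot Require Import Defs.
From Stdlib Require Import Reals Lra Lia Classical ClassicalEpsilon FunctionalExtensionality.
From mathcomp Require classical_sets.
Open Scope R_scope.

Lemma zorn_preorder (T : Type) (le : T -> T -> Prop) (t0 : T) :
  (forall x, le x x) ->
  (forall x y z, le x y -> le y z -> le x z) ->
  (forall C : T -> Prop, (forall x y, C x -> C y -> le x y \/ le y x) ->
     exists u, forall x, C x -> le x u) ->
  exists m, forall y, le m y -> le y m.
Proof.
  intros Hrefl Htrans Hchain.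
  set (leb x y := if excluded_middle_informative (le x y) then true else false).
  assert (Hleb : forall x y, leb x y = true <-> le x y).
  { intros x y. unfold leb. destruct excluded_middle_informative; split; easy. }
  destruct (@classical_sets.ZL_preorder T t0 leb) as [m Hm].
  - intro x. apply Hleb, Hrefl.
  - intros x y z Hxy Hyz. apply Hleb. apply Hleb in Hxy, Hyz. eauto.
  - intros C HC. destruct (Hchain C) as [u Hu].
    + intros x y Cx Cy. destruct (HC x y Cx Cy) as [H|H]; [left|right]; apply Hleb, H.
    + exists u. intros x Cx. apply Hleb, Hu, Cx.
  - exists m. intros y Hy. apply Hleb, Hm, Hleb, Hy.
Qed.

(* Hahn–Banach dominated extension on a real vector space E, relative to a
   subset D closed under the operations (later: the bounded sequences). *)
Section HahnBanach.
Variable E : Type.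
Variables (add : E -> E -> E) (smul : R -> E -> E) (zero : E).
Hypothesis add_assoc : forall x y z, add x (add y z) = add (add x y) z.
Hypothesis add_comm : forall x y, add x y = add y x.
Hypothesis add_0 : forall x, add x zero = x.
Hypothesis smul_assoc : forall a b x, smul a (smul b x) = smul (a * b) x.
Hypothesis smul_1 : forall x, smul 1 x = x.
Hypothesis smul_distr_v : forall a x y, smul a (add x y) = add (smul a x) (smul a y).
Hypothesis smul_distr_c : forall a b x, smul (a + b) x = add (smul a x) (smul b x).
Hypothesis smul_0 : forall x, smul 0 x = zero.
Variable D : E -> Prop.
Hypothesis D_add : forall x y, D x -> D y -> D (add x y).
Hypothesis D_smul : forall t x, D x -> D (smul t x).
Variable p : E -> R.
Hypothesis p_add : forall x y, D x -> D y -> p (add x y) <= p x + p y.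
Hypothesis p_smul : forall t x, 0 <= t -> D x -> p (smul t x) = t * p x.
Variable z0 : E.
Hypothesis D_z0 : D z0.

Lemma D_zero : D zero.
Proof. rewrite <- (smul_0 z0). auto. Qed.

Lemma add_0l x : add zero x = x.
Proof. rewrite add_comm; auto. Qed.

Lemma add_neg_r x : add x (smul (-1) x) = zero.
Proof.
  rewrite <- (smul_1 x) at 1. rewrite <- smul_distr_c.
  replace (1 + -1) with 0 by ring. auto.
Qed.

Lemma add_neg_l x : add (smul (-1) x) x = zero.
Proof. rewrite add_comm; apply add_neg_r. Qed.

Lemma smul_zero t : smul t zero = zero.
Proof. rewrite <- (smul_0 zero), smul_assoc. f_equal. ring. Qed.

Lemma p_zero : p zero = 0.
Proof. rewrite <- (smul_0 zero), p_smul; [ring | lra | apply D_zero]. Qed.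

(* Graphs of partial linear functionals on D that are dominated by p and take
   the value p z0 at z0; relations avoid having to speak of partial functions. *)
Record dominated_graph (G : E -> R -> Prop) : Prop := {
  dg_dom : forall x a, G x a -> D x;
  dg_add : forall x y a b, G x a -> G y b -> G (add x y) (a + b);
  dg_smul : forall t x a, G x a -> G (smul t x) (t * a);
  dg_zero : forall a, G zero a -> a = 0;
  dg_le : forall x a, G x a -> a <= p x;
  dg_z0 : G z0 (p z0)
}.

Section Graph.
Variable G : E -> R -> Prop.
Hypothesis HG : dominated_graph G.

Lemma dg_functional x a b : G x a -> G x b -> a = b.
Proof.
  intros Ha Hb. pose proof (dg_add _ HG _ _ _ _ Ha (dg_smul _ HG (-1) _ _ Hb)) as H.
  rewrite add_neg_r in H. apply (dg_zero _ HG) in H. lra.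
Qed.

Lemma dg_at_zero : G zero 0.
Proof.
  pose proof (dg_smul _ HG 0 _ _ (dg_z0 _ HG)) as H. rewrite smul_0, Rmult_0_l in H. exact H.
Qed.

(* For x, y in the domain of G, every candidate lower bound for the value at z
   lies below every candidate upper bound. *)
Lemma extension_gap z x y a b : D z -> G x a -> G y b ->
  b - p (add y (smul (-1) z)) <= p (add x z) - a.
Proof.
  intros Dz Hx Hy.
  assert (Dx : D x) by (eapply dg_dom; eauto).
  assert (Dy : D y) by (eapply dg_dom; eauto).
  pose proof (dg_le _ HG _ _ (dg_add _ HG _ _ _ _ Hy Hx)) as Hyx.
  assert (Hsplit : add y x = add (add y (smul (-1) z)) (add x z)).
  { rewrite <- add_assoc. f_equal. rewrite (add_comm x z), add_assoc, add_neg_l, add_0l. auto. }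
  rewrite Hsplit in Hyx.
  pose proof (p_add _ _ (D_add _ _ Dy (D_smul (-1) _ Dz)) (D_add _ _ Dx Dz)). lra.
Qed.

Lemma extension_value z : D z -> exists c,
  (forall y b, G y b -> b - p (add y (smul (-1) z)) <= c) /\
  (forall x a, G x a -> c <= p (add x z) - a).
Proof.
  intro Dz.
  set (Low := fun r => exists y b, G y b /\ r = b - p (add y (smul (-1) z))).
  assert (Hbd : bound Low).
  { exists (p (add zero z) - 0). intros r [y [b [Hy ->]]].
    apply (extension_gap z zero y 0 b); auto. apply dg_at_zero. }
  assert (Hne : exists r, Low r).
  { exists (0 - p (add zero (smul (-1) z))), zero, 0. split; auto. apply dg_at_zero. }
  destruct (completeness Low Hbd Hne) as [c [Hub Hlub]].
  exists c. split.
  - intros y b Hy. apply Hub. exists y, b; auto.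
  - intros x a Hx. apply Hlub. intros r [y [b [Hy ->]]]. apply (extension_gap z x y a b); auto.
Qed.

(* Extending G by the value c at z stays below p, by positive homogeneity. *)
Lemma extension_dominated z c : D z ->
  (forall y b, G y b -> b - p (add y (smul (-1) z)) <= c) ->
  (forall x a, G x a -> c <= p (add x z) - a) ->
  forall x b t, G x b -> b + t * c <= p (add x (smul t z)).
Proof.
  intros Dz Hlow Hup x b t Hx.
  assert (Dx : D x) by (eapply dg_dom; eauto).
  destruct (Rtotal_order t 0) as [Ht|[Ht|Ht]].
  - set (s := - t). assert (Hs : 0 < s) by (unfold s; lra).
    pose proof (Hlow _ _ (dg_smul _ HG (/ s) _ _ Hx)) as H.
    assert (Heq : add x (smul t z) = smul s (add (smul (/ s) x) (smul (-1) z))).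
    { rewrite smul_distr_v, !smul_assoc. replace (s * / s) with 1 by (field; lra).
      replace (s * -1) with t by (unfold s; ring). rewrite smul_1; auto. }
    rewrite Heq, p_smul by (lra || auto).
    apply Rmult_le_compat_l with (r := s) in H; [|lra].
    replace (s * (/ s * b - p (add (smul (/ s) x) (smul (-1) z))))
      with (b - s * p (add (smul (/ s) x) (smul (-1) z))) in H by (field; lra).
    unfold s in *. lra.
  - subst t. rewrite smul_0, add_0. pose proof (dg_le _ HG _ _ Hx). lra.
  - pose proof (Hup _ _ (dg_smul _ HG (/ t) _ _ Hx)) as H.
    assert (Heq : add x (smul t z) = smul t (add (smul (/ t) x) z)).
    { rewrite smul_distr_v, !smul_assoc. replace (t * / t) with 1 by (field; lra).
      rewrite smul_1; auto. }
    rewrite Heq, p_smul by (lra || auto).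
    apply Rmult_le_compat_l with (r := t) in H; [|lra].
    replace (t * (p (add (smul (/ t) x) z) - / t * b))
      with (t * p (add (smul (/ t) x) z) - b) in H by (field; lra).
    lra.
Qed.

Definition extend_graph (z : E) (c : R) (w : E) (a : R) : Prop :=
  exists x b t, G x b /\ w = add x (smul t z) /\ a = b + t * c.

Lemma extend_graph_dominated z c : D z -> ~ (exists a, G z a) ->
  (forall x b t, G x b -> b + t * c <= p (add x (smul t z))) ->
  dominated_graph (extend_graph z c).
Proof.
  intros Dz Nz Hc. split.
  - intros w a [x [b [t [Hx [-> _]]]]]. apply D_add; auto. eapply dg_dom; eauto.
  - intros w1 w2 a1 a2 [x [b [t [Hx [-> ->]]]]] [y [d [s [Hy [-> ->]]]]].
    exists (add x y), (b + d), (t + s). split; [apply (dg_add _ HG); auto | split].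
    + rewrite smul_distr_c. rewrite <- !add_assoc. f_equal.
      rewrite !add_assoc, (add_comm (smul t z) y). reflexivity.
    + ring.
  - intros r w a [x [b [t [Hx [-> ->]]]]]. exists (smul r x), (r * b), (r * t).
    split; [apply (dg_smul _ HG); auto | split].
    + rewrite smul_distr_v, smul_assoc; auto.
    + ring.
  - (* a nonzero multiple of z in the old domain would put z there *)
    intros a [x [b [t [Hx [E0 ->]]]]]. destruct (Req_dec t 0) as [->|Ht].
    + rewrite smul_0, add_0 in E0. subst x. rewrite (dg_zero _ HG _ Hx). ring.
    + exfalso. apply Nz. exists (/ t * (-1 * b)).
      assert (Htz : smul t z = smul (-1) x).
      { transitivity (add (add (smul (-1) x) x) (smul t z)).
        - rewrite add_neg_l, add_0l; auto.
        - rewrite <- add_assoc, <- E0, add_0; auto. }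
      assert (Hz : z = smul (/ t) (smul (-1) x)).
      { rewrite <- Htz, smul_assoc. replace (/ t * t) with 1 by (field; auto). rewrite smul_1; auto. }
      rewrite Hz. apply (dg_smul _ HG), (dg_smul _ HG); auto.
  - intros w a [x [b [t [Hx [-> ->]]]]]. apply Hc; auto.
  - exists z0, (p z0), 0. split; [apply (dg_z0 _ HG) | split].
    + rewrite smul_0, add_0; auto.
    + ring.
Qed.

End Graph.

Definition line_graph (x : E) (a : R) : Prop := exists t, x = smul t z0 /\ a = t * p z0.

Lemma line_graph_sub G : dominated_graph G -> forall x a, line_graph x a -> G x a.
Proof. intros HG x a [t [-> ->]]. apply (dg_smul _ HG), (dg_z0 _ HG). Qed.

Lemma line_graph_dominated : dominated_graph line_graph.
Proof.
  split.
  - intros x a [t [-> _]]; auto.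
  - intros x y a b [t [-> ->]] [s [-> ->]]. exists (t + s). split; [rewrite smul_distr_c; auto | ring].
  - intros t x a [s [-> ->]]. exists (t * s). split; [rewrite smul_assoc; auto | ring].
  - intros a [t [E0 ->]]. destruct (Req_dec t 0) as [->|Ht]; [ring|].
    assert (Hz0 : z0 = zero).
    { rewrite <- (smul_1 z0). replace 1 with (/ t * t) by (field; auto).
      rewrite <- smul_assoc, <- E0. apply smul_zero. }
    rewrite Hz0, p_zero. ring.
  - (* for t < 0 use p(z0) + p(-z0) >= p(0) = 0 *)
    intros x a [t [-> ->]]. destruct (Rle_dec 0 t) as [Ht|Ht].
    + rewrite p_smul; auto. lra.
    + replace t with ((- t) * -1) by ring. rewrite <- smul_assoc, p_smul by (lra || auto).
      pose proof (p_add _ _ D_z0 (D_smul (-1) _ D_z0)) as H.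
      rewrite add_neg_r, p_zero in H. nra.
  - exists 1. split; [rewrite smul_1; auto | ring].
Qed.

(* Dominated graphs ordered by inclusion; a chain is bounded by its union
   (together with the line graph, to cover the empty chain). *)
Definition dgraph := { G : E -> R -> Prop | dominated_graph G }.
Definition dgraph_le (A B : dgraph) : Prop :=
  forall x a, proj1_sig A x a -> proj1_sig B x a.

Definition chain_union (C : dgraph -> Prop) (x : E) (a : R) : Prop :=
  line_graph x a \/ exists A, C A /\ proj1_sig A x a.

Lemma chain_union_dominated C :
  (forall A B, C A -> C B -> dgraph_le A B \/ dgraph_le B A) ->
  dominated_graph (chain_union C).
Proof.
  intros Hc. pose proof line_graph_dominated as H0.
  assert (Hsub : forall A : dgraph, forall x a, line_graph x a -> proj1_sig A x a).
  { intros A. apply line_graph_sub, (proj2_sig A). }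
  split.
  - intros x a [H|[A [_ H]]]; [eapply dg_dom; eauto|]. eapply dg_dom; [apply (proj2_sig A)|eauto].
  - (* two elements of the union lie in a common member of the chain *)
    intros x y a b Hx Hy.
    destruct Hx as [Hx|[A [CA Hx]]]; destruct Hy as [Hy|[B [CB Hy]]].
    + left. apply (dg_add _ H0); auto.
    + right. exists B. split; auto. apply (dg_add _ (proj2_sig B)); auto.
    + right. exists A. split; auto. apply (dg_add _ (proj2_sig A)); auto.
    + destruct (Hc A B CA CB) as [L|L].
      * right. exists B. split; auto. apply (dg_add _ (proj2_sig B)); auto.
      * right. exists A. split; auto. apply (dg_add _ (proj2_sig A)); auto.
  - intros t x a [H|[A [CA H]]]; [left; apply (dg_smul _ H0); auto|].
    right; exists A; split; auto. apply (dg_smul _ (proj2_sig A)); auto.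
  - intros a [H|[A [CA H]]]; [eapply dg_zero; eauto|]. eapply dg_zero; [apply (proj2_sig A)|eauto].
  - intros x a [H|[A [CA H]]]; [eapply dg_le; eauto|]. eapply dg_le; [apply (proj2_sig A)|eauto].
  - left. apply (dg_z0 _ H0).
Qed.

(* Hahn–Banach: a maximal dominated graph (Zorn) is defined on all of D,
   since otherwise the one-step extension would enlarge it. *)
Theorem hahn_banach : exists l : E -> R,
  (forall x y, D x -> D y -> l (add x y) = l x + l y) /\
  (forall t x, D x -> l (smul t x) = t * l x) /\
  (forall x, D x -> l x <= p x) /\ l z0 = p z0.
Proof.
  destruct (zorn_preorder dgraph dgraph_le (exist _ _ line_graph_dominated)) as [[G HG] Hmax].
  - intros A x a H; auto.
  - intros A B C HAB HBC x a H; auto.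
  - intros C HC. exists (exist _ (chain_union C) (chain_union_dominated C HC)).
    intros A CA x a H. right. exists A; auto.
  - unfold dgraph_le in Hmax; simpl in Hmax.
    assert (Htotal : forall z, D z -> exists a, G z a).
    { intros z Dz. apply NNPP; intro Nz.
      destruct (extension_value G HG z Dz) as [c [Hlow Hup]].
      pose proof (extend_graph_dominated G HG z c Dz Nz
        (extension_dominated G HG z c Dz Hlow Hup)) as Hext.
      assert (Hle : forall x a, G x a -> extend_graph G z c x a).
      { intros x a H. exists x, a, 0. repeat split; auto; [rewrite smul_0, add_0; auto | ring]. }
      apply Nz. exists c. apply (Hmax (exist _ _ Hext) Hle).
      exists zero, 0, 1. repeat split; [apply (dg_at_zero G HG) | rewrite smul_1, add_0l; auto | ring]. }
    set (l := fun x => epsilon (inhabits 0) (fun a => G x a)).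
    assert (Hl : forall x, D x -> G x (l x)) by (intros x Dx; apply epsilon_spec; auto).
    exists l. repeat split.
    + intros x y Dx Dy. apply (dg_functional G HG (add x y)); [apply Hl; auto | apply (dg_add _ HG); auto].
    + intros t x Dx. apply (dg_functional G HG (smul t x)); [apply Hl; auto | apply (dg_smul _ HG); auto].
    + intros x Dx. apply (dg_le _ HG). auto.
    + apply (dg_functional G HG z0); [apply Hl; auto | apply (dg_z0 _ HG)].
Qed.

End HahnBanach.

Arguments vadd_assoc {_}. Arguments vadd_comm {_}. Arguments vadd_0 {_}.
Arguments vadd_opp {_}. Arguments vscal_assoc {_}. Arguments vscal_1 {_}.
Arguments vscal_distr_v {_}. Arguments vscal_distr_c {_}.
Arguments vnorm_scal {_}. Arguments vnorm_triangle {_}.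

Section RealStructure.
Variable V : CNormedSpace.

Definition rscal (t : R) (x : V) : V := vscal (RtoC t) x.

Lemma vadd_0l (x : V) : vadd vzero x = x.
Proof. rewrite vadd_comm. apply vadd_0. Qed.

Lemma vadd_cancel (a x y : V) : vadd a x = vadd a y -> x = y.
Proof.
  intro H. assert (E : vadd (vopp a) (vadd a x) = vadd (vopp a) (vadd a y)) by (rewrite H; auto).
  rewrite !vadd_assoc, (vadd_comm (vopp a) a), vadd_opp, !vadd_0l in E. exact E.
Qed.

Lemma rscal_assoc a b (x : V) : rscal a (rscal b x) = rscal (a * b) x.
Proof. unfold rscal. rewrite vscal_assoc. f_equal. unfold Cmul, RtoC; simpl. f_equal; ring. Qed.

Lemma rscal_1 (x : V) : rscal 1 x = x.
Proof. apply vscal_1. Qed.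

Lemma rscal_distr_v a (x y : V) : rscal a (vadd x y) = vadd (rscal a x) (rscal a y).
Proof. apply vscal_distr_v. Qed.

Lemma rscal_distr_c a b (x : V) : rscal (a + b) x = vadd (rscal a x) (rscal b x).
Proof. unfold rscal. rewrite <- vscal_distr_c. f_equal. unfold Cadd, RtoC; simpl. f_equal; ring. Qed.

Lemma rscal_0 (x : V) : rscal 0 x = vzero.
Proof.
  assert (H : vadd (rscal 0 x) (rscal 0 x) = vadd (rscal 0 x) vzero).
  { rewrite <- rscal_distr_c, vadd_0. f_equal. ring. }
  symmetry. eapply vadd_cancel; eauto.
Qed.

Lemma rscal_m1 (x : V) : rscal (-1) x = vopp x.
Proof.
  apply (vadd_cancel x). rewrite vadd_opp. rewrite <- (rscal_1 x) at 1.
  rewrite <- rscal_distr_c. replace (1 + -1) with 0 by ring. apply rscal_0.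
Qed.

Lemma rscal_zero t : rscal t (@vzero V) = vzero.
Proof. rewrite <- (rscal_0 vzero), rscal_assoc. f_equal. ring. Qed.

Lemma Cmod_RtoC t : Cmod (RtoC t) = Rabs t.
Proof. unfold Cmod, RtoC; simpl. rewrite <- sqrt_Rsqr_abs. f_equal. unfold Rsqr. ring. Qed.

Lemma Cmod_nonneg z : 0 <= Cmod z.
Proof. apply sqrt_pos. Qed.

Lemma vnorm_rscal t (x : V) : vnorm (rscal t x) = Rabs t * vnorm x.
Proof. unfold rscal. rewrite vnorm_scal, Cmod_RtoC. auto. Qed.

Lemma vnorm_zero : vnorm (@vzero V) = 0.
Proof. rewrite <- (rscal_0 vzero), vnorm_rscal, Rabs_R0. ring. Qed.

Lemma vnorm_opp (x : V) : vnorm (vopp x) = vnorm x.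
Proof. rewrite <- rscal_m1, vnorm_rscal, Rabs_left by lra. ring. Qed.

Lemma vnorm_nonneg (x : V) : 0 <= vnorm x.
Proof.
  pose proof (vnorm_triangle x (vopp x)) as H.
  rewrite vadd_opp, vnorm_zero, vnorm_opp in H. lra.
Qed.

Lemma vdist_sym (x y : V) : vdist V x y = vdist V y x.
Proof.
  unfold vdist. rewrite <- vnorm_opp. f_equal. apply (vadd_cancel (vadd x (vopp y))).
  rewrite vadd_opp, <- vadd_assoc, (vadd_assoc (vopp y) y), (vadd_comm (vopp y) y),
    vadd_opp, vadd_0l, vadd_opp. auto.
Qed.

Fixpoint vsum (x : nat -> V) (m : nat) : V :=
  match m with O => vzero | S m' => vadd (vsum x m') (x m') end.

Lemma vsum_ext x y m : (forall j, x j = y j) -> vsum x m = vsum y m.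
Proof. intro H. induction m; simpl; auto. rewrite IHm, H; auto. Qed.

Lemma vsum_add x y m : vsum (fun j => vadd (x j) (y j)) m = vadd (vsum x m) (vsum y m).
Proof.
  induction m; cbn [vsum]; [rewrite vadd_0; auto|]. rewrite IHm, <- !vadd_assoc. f_equal.
  rewrite !vadd_assoc. f_equal. apply vadd_comm.
Qed.

Lemma vsum_rscal t x m : vsum (fun j => rscal t (x j)) m = rscal t (vsum x m).
Proof. induction m; cbn [vsum]; [rewrite rscal_zero; auto|]. rewrite IHm, rscal_distr_v; auto. Qed.

Lemma vsum_const (v : V) m : vsum (fun _ => v) m = rscal (INR m) v.
Proof.
  induction m; cbn [vsum]; [rewrite rscal_0; auto|].
  rewrite IHm, S_INR, rscal_distr_c, rscal_1; auto.
Qed.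

Lemma vsum_norm x m B : (forall j, vnorm (x j) <= B) -> vnorm (vsum x m) <= INR m * B.
Proof.
  intro H. induction m; cbn [vsum]; [rewrite vnorm_zero; simpl; lra|].
  rewrite S_INR. pose proof (vnorm_triangle (vsum x m) (x m)). pose proof (H m). lra.
Qed.

Lemma vsum_telescope (x : nat -> V) k m :
  vsum (fun j => vadd (x (k + j)%nat) (vopp (x (S (k + j))))) m = vadd (x k) (vopp (x (k + m)%nat)).
Proof.
  induction m; cbn [vsum].
  - rewrite Nat.add_0_r, vadd_opp; auto.
  - rewrite IHm, <- vadd_assoc. f_equal.
    rewrite vadd_assoc, (vadd_comm (vopp _)), vadd_opp, vadd_0l. do 2 f_equal. lia.
Qed.

Lemma convex_mean (A : V -> Prop) (x : nat -> V) : convex A -> (forall j, A (x j)) ->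
  forall m, (1 <= m)%nat -> A (rscal (/ INR m) (vsum x m)).
Proof.
  intros HA Hx m Hm. induction m as [|m IH]; [lia|].
  destruct (Nat.eq_dec m 0) as [->|Hm0].
  - simpl. rewrite vadd_0l. replace (/ 1) with 1 by field. rewrite rscal_1; auto.
  - assert (Hpos : 0 < INR m) by (apply lt_0_INR; lia).
    specialize (IH ltac:(lia)). simpl vsum. rewrite S_INR.
    set (t := INR m / (INR m + 1)).
    assert (E : rscal (/ (INR m + 1)) (vadd (vsum x m) (x m)) =
      vadd (rscal t (rscal (/ INR m) (vsum x m))) (rscal (1 - t) (x m))).
    { rewrite rscal_distr_v, rscal_assoc. f_equal; f_equal; unfold t; field; lra. }
    rewrite E. apply HA; auto. unfold t. split.
    + apply Rmult_le_pos; [lra|]. left; apply Rinv_0_lt_compat; lra.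
    + apply Rmult_le_reg_r with (INR m + 1); [lra|].
      unfold Rdiv. rewrite Rmult_assoc, Rinv_l by lra. lra.
Qed.

End RealStructure.

Arguments rscal {_}. Arguments vsum {_}.

(* a least upper bound, whenever one exists *)
Definition Rsup (S : R -> Prop) : R := epsilon (inhabits 0) (fun s => is_lub S s).

Lemma Rsup_spec S : bound S -> (exists x, S x) -> is_lub S (Rsup S).
Proof.
  intros Hb Hne. unfold Rsup. apply epsilon_spec.
  destruct (completeness S Hb Hne) as [m Hm]. exists m; auto.
Qed.

Lemma le_epsilon_of a b : (forall eps, 0 < eps -> a <= b + eps) -> a <= b.
Proof. intro H. destruct (Rle_dec a b); auto. specialize (H ((a - b) / 2)). lra. Qed.

Lemma INR_pos m : (1 <= m)%nat -> 0 < INR m.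
Proof. intro; apply lt_0_INR; lia. Qed.

Section Sequences.
Variable V : CNormedSpace.

Definition sadd (x y : nat -> V) : nat -> V := fun n => vadd (x n) (y n).
Definition sscal (t : R) (x : nat -> V) : nat -> V := fun n => rscal t (x n).

Lemma seq_ext (x y : nat -> V) : (forall n, x n = y n) -> x = y.
Proof. intro H; apply functional_extensionality; auto. Qed.

Lemma bound_nonneg (x : nat -> V) B : (forall n, vnorm (x n) <= B) -> 0 <= B.
Proof. intro H. pose proof (H 0%nat). pose proof (vnorm_nonneg V (x 0%nat)). lra. Qed.

Lemma bounded_add x y : bounded_seq x -> bounded_seq y -> bounded_seq (sadd x y).
Proof.
  intros [B1 H1] [B2 H2]. exists (B1 + B2). intro n. unfold sadd.
  pose proof (vnorm_triangle (x n) (y n)). pose proof (H1 n). pose proof (H2 n). lra.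
Qed.

Lemma bounded_vscal a (x : nat -> V) : bounded_seq x -> bounded_seq (fun n => vscal a (x n)).
Proof.
  intros [B HB]. exists (Cmod a * B). intro n. rewrite vnorm_scal.
  apply Rmult_le_compat_l; [apply Cmod_nonneg | auto].
Qed.

Lemma bounded_sscal t x : bounded_seq x -> bounded_seq (sscal t x).
Proof. apply bounded_vscal. Qed.

Lemma bounded_shift x : bounded_seq x -> bounded_seq (shift V x).
Proof. intros [B HB]. exists B. intro n. apply HB. Qed.

Lemma bounded_const v : bounded_seq (const_seq V v).
Proof. exists (vnorm v). intro n. unfold const_seq. lra. Qed.

End Sequences.

Arguments sadd {_}. Arguments sscal {_}.

(* The upper mean of a sequence y is the limit, as N grows, of the supremum of
   the norms of the averages of y over windows [k, k+m) of length m >= N: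
     upper_mean y = inf_N sup_{m >= N, k} |(y k + ... + y (k+m-1)) / m|.
   It is a sublinear functional on bounded sequences, dominated by the sup
   norm, that kills y - shift y and its opposite, and that is large on v - x
   whenever x takes values in a convex set far from v. *)
Section UpperMean.
Variable V : CNormedSpace.

Definition window_mean (y : nat -> V) m k : R :=
  vnorm (vsum (fun j => y (k + j)%nat) m) / INR m.

Definition window_means N y (r : R) : Prop :=
  exists m k, (N <= m)%nat /\ (1 <= m)%nat /\ r = window_mean y m k.

Definition tail_sup N y : R := Rsup (window_means N y).

Definition upper_mean y : R := - Rsup (fun r => exists N, r = - tail_sup N y).

Lemma window_mean_nonneg y m k : (1 <= m)%nat -> 0 <= window_mean y m k.
Proof.
  intro H. unfold window_mean, Rdiv. apply Rmult_le_pos; [apply vnorm_nonneg|].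
  left; apply Rinv_0_lt_compat, INR_pos; auto.
Qed.

Lemma window_mean_le y B m k :
  (forall n, vnorm (y n) <= B) -> (1 <= m)%nat -> window_mean y m k <= B.
Proof.
  intros HB Hm. unfold window_mean. pose proof (INR_pos m Hm).
  pose proof (vsum_norm V (fun j => y (k + j)%nat) m B (fun j => HB _)).
  apply Rmult_le_reg_r with (INR m); auto. unfold Rdiv. rewrite Rmult_assoc, Rinv_l by lra. lra.
Qed.

Section Bounded.
Variable y : nat -> V.
Variable B : R.
Hypothesis HB : forall n, vnorm (y n) <= B.

Lemma tail_sup_spec N : is_lub (window_means N y) (tail_sup N y).
Proof.
  apply Rsup_spec.
  - exists B. intros r [m [k [_ [Hm ->]]]]. apply window_mean_le; auto.
  - exists (window_mean y (Nat.max N 1) 0), (Nat.max N 1), 0%nat. repeat split; auto; lia.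
Qed.

Lemma tail_sup_ge N m k : (N <= m)%nat -> (1 <= m)%nat -> window_mean y m k <= tail_sup N y.
Proof. intros. apply (proj1 (tail_sup_spec N)). exists m, k; auto. Qed.

Lemma tail_sup_le N c :
  (forall m k, (N <= m)%nat -> (1 <= m)%nat -> window_mean y m k <= c) -> tail_sup N y <= c.
Proof. intro H. apply (proj2 (tail_sup_spec N)). intros r [m [k [H1 [H2 ->]]]]. auto. Qed.

Lemma tail_sup_nonneg N : 0 <= tail_sup N y.
Proof.
  eapply Rle_trans; [apply (window_mean_nonneg y (Nat.max N 1) 0); lia|].
  apply tail_sup_ge; lia.
Qed.

Lemma tail_sup_anti N1 N2 : (N1 <= N2)%nat -> tail_sup N2 y <= tail_sup N1 y.
Proof. intro H. apply tail_sup_le. intros. apply tail_sup_ge; auto; lia. Qed.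

Lemma upper_mean_spec : is_lub (fun r => exists N, r = - tail_sup N y) (- upper_mean y).
Proof.
  unfold upper_mean. rewrite Ropp_involutive. apply Rsup_spec.
  - exists 0. intros r [N ->]. pose proof (tail_sup_nonneg N). lra.
  - exists (- tail_sup 0 y), 0%nat; auto.
Qed.

Lemma upper_mean_le_tail N : upper_mean y <= tail_sup N y.
Proof.
  assert (H : - tail_sup N y <= - upper_mean y) by (apply (proj1 upper_mean_spec); exists N; auto).
  lra.
Qed.

Lemma upper_mean_ge c : (forall N, c <= tail_sup N y) -> c <= upper_mean y.
Proof.
  intro H. assert (H' : - upper_mean y <= - c).
  { apply (proj2 upper_mean_spec). intros r [N ->]. specialize (H N). lra. }
  lra.
Qed.

Lemma upper_mean_approx eps : 0 < eps -> exists N, tail_sup N y < upper_mean y + eps.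
Proof.
  intro He. apply NNPP. intro Hn.
  assert (H : upper_mean y + eps <= upper_mean y).
  { apply upper_mean_ge. intro N. apply Rnot_lt_le. intro HN. apply Hn. exists N; auto. }
  lra.
Qed.

Lemma upper_mean_nonneg : 0 <= upper_mean y.
Proof. apply upper_mean_ge, tail_sup_nonneg. Qed.

Lemma upper_mean_le_bound : upper_mean y <= B.
Proof.
  eapply Rle_trans; [apply (upper_mean_le_tail 0)|].
  apply tail_sup_le. intros. apply window_mean_le; auto.
Qed.

End Bounded.

(* Subadditivity, inherited from the triangle inequality window by window. *)
Lemma upper_mean_add y z : bounded_seq y -> bounded_seq z ->
  upper_mean (sadd y z) <= upper_mean y + upper_mean z.
Proof.
  intros Hy Hz. destruct (bounded_add V y z Hy Hz) as [C HC].
  destruct Hy as [B1 H1], Hz as [B2 H2].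
  assert (Htail : forall N, tail_sup N (sadd y z) <= tail_sup N y + tail_sup N z).
  { intro N. apply (tail_sup_le _ C HC). intros m k Hm H1m.
    apply Rle_trans with (window_mean y m k + window_mean z m k).
    - unfold window_mean, sadd.
      rewrite (vsum_add V (fun j => y (k + j)%nat) (fun j => z (k + j)%nat)).
      pose proof (INR_pos m H1m). unfold Rdiv. rewrite <- Rmult_plus_distr_r.
      apply Rmult_le_compat_r; [left; apply Rinv_0_lt_compat; auto | apply vnorm_triangle].
    - pose proof (tail_sup_ge y B1 H1 N m k Hm H1m).
      pose proof (tail_sup_ge z B2 H2 N m k Hm H1m). lra. }
  apply le_epsilon_of. intros eps He.
  destruct (upper_mean_approx y B1 H1 (eps / 2)) as [N1 HN1]; [lra|].
  destruct (upper_mean_approx z B2 H2 (eps / 2)) as [N2 HN2]; [lra|].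
  pose proof (upper_mean_le_tail _ C HC (Nat.max N1 N2)).
  pose proof (Htail (Nat.max N1 N2)).
  pose proof (tail_sup_anti y B1 H1 N1 (Nat.max N1 N2) ltac:(lia)).
  pose proof (tail_sup_anti z B2 H2 N2 (Nat.max N1 N2) ltac:(lia)). lra.
Qed.

(* Scaling by t >= 0 scales every window mean by t. *)
Lemma upper_mean_sscal_le t y : 0 <= t -> bounded_seq y ->
  upper_mean (sscal t y) <= t * upper_mean y.
Proof.
  intros Ht Hy. destruct (bounded_sscal V t y Hy) as [C HC]. destruct Hy as [B HB].
  assert (Htail : forall N, tail_sup N (sscal t y) <= t * tail_sup N y).
  { intro N. apply (tail_sup_le _ C HC). intros m k Hm H1m.
    unfold window_mean, sscal. rewrite vsum_rscal, vnorm_rscal, Rabs_pos_eq by auto.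
    unfold Rdiv. rewrite Rmult_assoc. apply Rmult_le_compat_l; auto.
    apply (tail_sup_ge y B HB N m k Hm H1m). }
  apply le_epsilon_of. intros eps He.
  destruct (upper_mean_approx y B HB (eps / (t + 1))) as [N HN].
  { apply Rdiv_lt_0_compat; lra. }
  pose proof (upper_mean_le_tail _ C HC N). pose proof (Htail N).
  assert (t * tail_sup N y <= t * (upper_mean y + eps / (t + 1))) by (apply Rmult_le_compat_l; lra).
  assert (t * (eps / (t + 1)) <= eps).
  { apply Rmult_le_reg_r with (t + 1); [lra|]. unfold Rdiv. field_simplify; nra. }
  nra.
Qed.

Lemma upper_mean_sscal t y : 0 <= t -> bounded_seq y -> upper_mean (sscal t y) = t * upper_mean y.
Proof.
  intros Ht Hy. apply Rle_antisym; [apply upper_mean_sscal_le; auto|].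
  destruct (Req_dec t 0) as [->|Hn].
  - destruct (bounded_sscal V 0 y Hy) as [C HC]. rewrite Rmult_0_l. apply (upper_mean_nonneg _ C HC).
  - assert (Hyy : y = sscal (/ t) (sscal t y)).
    { apply seq_ext. intro n. unfold sscal. rewrite rscal_assoc, Rinv_l, rscal_1; auto. }
    pose proof (upper_mean_sscal_le (/ t) (sscal t y)) as H. rewrite <- Hyy in H.
    assert (H' : upper_mean y <= / t * upper_mean (sscal t y)).
    { apply H; [left; apply Rinv_0_lt_compat; lra | apply bounded_sscal; auto]. }
    apply Rmult_le_compat_l with (r := t) in H'; [|lra].
    rewrite <- Rmult_assoc, Rinv_r, Rmult_1_l in H' by auto. exact H'.
Qed.

Lemma upper_mean_nonpos w C : bounded_seq w -> 0 <= C ->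
  (forall m k, (1 <= m)%nat -> vnorm (vsum (fun j => w (k + j)%nat) m) <= C) ->
  upper_mean w <= 0.
Proof.
  intros [B HB] HC H. apply Rnot_lt_le. intro Hpos.
  destruct (INR_archimed (upper_mean w) C Hpos) as [N HN].
  destruct N as [|N']; [simpl in HN; lra|].
  pose proof (INR_pos (S N') ltac:(lia)) as HSN.
  assert (Hq : tail_sup (S N') w <= C / INR (S N')).
  { apply (tail_sup_le _ B HB). intros m k Hm H1m. unfold window_mean.
    pose proof (INR_pos m H1m). pose proof (H m k H1m).
    assert (INR (S N') <= INR m) by (apply le_INR; auto).
    apply Rle_trans with (C / INR m).
    - unfold Rdiv. apply Rmult_le_compat_r; [left; apply Rinv_0_lt_compat|]; auto.
    - unfold Rdiv. apply Rmult_le_compat_l; auto. apply Rinv_le_contravar; auto. }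
  pose proof (upper_mean_le_tail _ B HB (S N')).
  assert (upper_mean w * INR (S N') <= C).
  { apply Rle_trans with (C / INR (S N') * INR (S N')); [apply Rmult_le_compat_r; lra|].
    unfold Rdiv. rewrite Rmult_assoc, Rinv_l by lra. lra. }
  lra.
Qed.

(* Every real multiple of y - shift y has upper mean <= 0: its window sums
   telescope to multiples of differences of two terms of y. *)
Lemma upper_mean_shift_diff y s : bounded_seq y ->
  upper_mean (sscal s (sadd y (sscal (-1) (shift V y)))) <= 0.
Proof.
  intro Hy.
  assert (Hw : bounded_seq (sscal s (sadd y (sscal (-1) (shift V y))))).
  { apply bounded_sscal, bounded_add, bounded_sscal, bounded_shift; auto. }
  destruct Hy as [B HB]. pose proof (bound_nonneg V y B HB).
  apply (upper_mean_nonpos _ (Rabs s * (B + B)) Hw); [apply Rmult_le_pos; [apply Rabs_pos | lra]|].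
  intros m k Hm. unfold sscal, sadd, shift. rewrite vsum_rscal, vnorm_rscal.
  rewrite (vsum_ext V _ (fun j => vadd (y (k + j)%nat) (vopp (y (S (k + j)))))).
  - rewrite vsum_telescope. apply Rmult_le_compat_l; [apply Rabs_pos|].
    pose proof (vnorm_triangle (y k) (vopp (y (k + m)%nat))) as Htri.
    rewrite vnorm_opp in Htri. pose proof (HB k). pose proof (HB (k + m)%nat). lra.
  - intro j. rewrite rscal_m1; auto.
Qed.

(* If x takes values in a convex set all of whose points are at distance at
   least d from v, then the upper mean of v - x is at least d: the windows
   starting at 0 average x to a point of the set. *)
Lemma upper_mean_separation (A : V -> Prop) (v : V) (x : nat -> V) d :
  convex A -> (forall n, A (x n)) -> (forall a, A a -> d <= vdist V v a) -> bounded_seq x ->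
  d <= upper_mean (sadd (const_seq V v) (sscal (-1) x)).
Proof.
  intros HA Hx Hd [B HB].
  set (u := sadd (const_seq V v) (sscal (-1) x)).
  assert (Hu : forall n, vnorm (u n) <= vnorm v + B).
  { intro n. unfold u, sadd, sscal, const_seq. rewrite rscal_m1.
    pose proof (vnorm_triangle v (vopp (x n))). rewrite vnorm_opp in H. pose proof (HB n). lra. }
  apply (upper_mean_ge _ _ Hu). intro N. set (m := Nat.max N 1).
  eapply Rle_trans; [|apply (tail_sup_ge _ _ Hu N m 0); lia].
  assert (Hm : 0 < INR m) by (apply INR_pos; lia).
  unfold window_mean, u, sadd, sscal, const_seq. simpl.
  rewrite (vsum_add V (fun _ => v) (fun j => rscal (-1) (x j))), vsum_const, vsum_rscal.
  assert (E : vnorm (vadd (rscal (INR m) v) (rscal (-1) (vsum x m))) / INR m =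
    vnorm (rscal (/ INR m) (vadd (rscal (INR m) v) (rscal (-1) (vsum x m))))).
  { rewrite vnorm_rscal, Rabs_pos_eq by (left; apply Rinv_0_lt_compat; auto). unfold Rdiv; ring. }
  rewrite E, rscal_distr_v, !rscal_assoc. replace (/ INR m * INR m) with 1 by (field; lra).
  replace (/ INR m * -1) with (-1 * / INR m) by ring. rewrite <- rscal_assoc, rscal_1, rscal_m1.
  apply Hd, convex_mean; auto. lia.
Qed.

End UpperMean.

(* A real-linear functional l on bounded sequences dominated by the upper mean
   is shift invariant, and its complexification L y = l y - i l (i y) is a
   Banach limit functional. *)
Section Complexify.
Variable V : CNormedSpace.
Variable l : (nat -> V) -> R.
Hypothesis l_add : forall x y, bounded_seq x -> bounded_seq y -> l (sadd x y) = l x + l y.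
Hypothesis l_sscal : forall t x, bounded_seq x -> l (sscal t x) = t * l x.
Hypothesis l_le : forall x, bounded_seq x -> l x <= upper_mean V x.

Definition Ci : Defs.C := mkC 0 1.

Definition times_i (y : nat -> V) : nat -> V := fun n => vscal Ci (y n).

Definition complexify (y : nat -> V) : Defs.C := mkC (l y) (- l (times_i y)).

Lemma vscal_decomp a b (w : V) : vscal (mkC a b) w = vadd (rscal a w) (rscal b (vscal Ci w)).
Proof.
  unfold rscal. rewrite vscal_assoc, <- vscal_distr_c. f_equal.
  unfold Cadd, Cmul, RtoC, Ci; simpl. f_equal; ring.
Qed.

Lemma l_vscal a b y : bounded_seq y ->
  l (fun n => vscal (mkC a b) (y n)) = a * l y + b * l (times_i y).
Proof.
  intro Hy. replace (fun n => vscal (mkC a b) (y n)) with (sadd (sscal a y) (sscal b (times_i y))).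
  - assert (Hiy : bounded_seq (times_i y)) by (apply bounded_vscal; auto).
    rewrite l_add, !l_sscal; auto using bounded_sscal.
  - apply seq_ext; intro n. unfold sadd, sscal, times_i. rewrite vscal_decomp; auto.
Qed.

(* Both l (y - shift y) and its opposite are bounded by upper means of
   multiples of y - shift y, which are <= 0. *)
Lemma l_shift y : bounded_seq y -> l (shift V y) = l y.
Proof.
  intro Hy. set (w := sadd y (sscal (-1) (shift V y))).
  assert (Hw : bounded_seq w) by (apply bounded_add, bounded_sscal, bounded_shift; auto).
  assert (Hlw : l w = l y - l (shift V y)).
  { unfold w. rewrite l_add, l_sscal; [ring | | |]; auto using bounded_shift, bounded_sscal. }
  pose proof (l_le _ (bounded_sscal V 1 w Hw)) as H1.
  pose proof (l_le _ (bounded_sscal V (-1) w Hw)) as H2.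
  pose proof (upper_mean_shift_diff V y 1 Hy) as H3.
  pose proof (upper_mean_shift_diff V y (-1) Hy) as H4.
  fold w in H3, H4. rewrite l_sscal in H1, H2 by auto. lra.
Qed.

Lemma complexify_add x y : bounded_seq x -> bounded_seq y ->
  complexify (fun n => vadd (x n) (y n)) = Cadd (complexify x) (complexify y).
Proof.
  intros Hx Hy. unfold complexify, Cadd; simpl.
  change (fun n => vadd (x n) (y n)) with (sadd x y).
  replace (times_i (sadd x y)) with (sadd (times_i x) (times_i y)).
  - assert (Hix : bounded_seq (times_i x)) by (apply bounded_vscal; auto).
    assert (Hiy : bounded_seq (times_i y)) by (apply bounded_vscal; auto).
    rewrite !l_add by auto. f_equal; ring.
  - apply seq_ext; intro n. unfold times_i, sadd. rewrite vscal_distr_v; auto.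
Qed.

Lemma complexify_mul a y : bounded_seq y ->
  complexify (fun n => vscal a (y n)) = Cmul a (complexify y).
Proof.
  intro Hy. destruct a as [a b]. unfold complexify, Cmul; simpl.
  replace (times_i (fun n => vscal (mkC a b) (y n))) with (fun n => vscal (mkC (-b) a) (y n)).
  - rewrite !l_vscal by auto. f_equal; ring.
  - apply seq_ext; intro n. unfold times_i. rewrite vscal_assoc. f_equal.
    unfold Cmul, Ci; simpl. f_equal; ring.
Qed.

(* Rotating y by the unimodular conjugate direction of z = L y makes L real,
   equal to |z|, and then |z| = l (a y) <= upper_mean (a y) <= M. *)
Lemma complexify_bound y M : bounded_seq y -> (forall n, vnorm (y n) <= M) ->
  Cmod (complexify y) <= M.
Proof.
  intros Hy HM. pose proof (bound_nonneg V y M HM) as HM0.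
  set (z := complexify y). set (r := Cmod z).
  assert (Hrr : r * r = Re z * Re z + Im z * Im z) by (apply sqrt_sqrt; nra).
  destruct (Req_dec r 0) as [Hr0|Hr0]; [lra|].
  assert (Hrp : 0 < r) by (assert (0 <= r) by apply Cmod_nonneg; lra).
  set (a := mkC (Re z / r) (- Im z / r)).
  assert (Ha : Cmod a = 1).
  { unfold Cmod, a; cbn [Re Im].
    replace (Re z / r * (Re z / r) + - Im z / r * (- Im z / r))
      with ((Re z * Re z + Im z * Im z) / (r * r)) by (field; auto).
    rewrite <- Hrr. replace (r * r / (r * r)) with 1 by (field; auto). apply sqrt_1. }
  assert (Hrot : l (fun n => vscal a (y n)) = r).
  { change (l (fun n => vscal a (y n))) with (Re (complexify (fun n => vscal a (y n)))).
    rewrite complexify_mul by auto. fold z. unfold Cmul, a; cbn [Re Im].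
    replace (Re z / r * Re z - - Im z / r * Im z) with ((Re z * Re z + Im z * Im z) / r)
      by (field; auto).
    rewrite <- Hrr. field; auto. }
  fold r. rewrite <- Hrot.
  eapply Rle_trans; [apply l_le, bounded_vscal; auto|].
  apply (upper_mean_le_bound V _ M). intro n. rewrite vnorm_scal, Ha, Rmult_1_l; auto.
Qed.

Lemma complexify_banach_limit : banach_limit complexify.
Proof.
  repeat split.
  - apply complexify_add.
  - apply complexify_mul.
  - apply complexify_bound.
  - intros x Hx. unfold complexify. change (times_i (shift V x)) with (shift V (times_i x)).
    rewrite !l_shift; auto. apply bounded_vscal; auto.
Qed.

End Complexify.

Theorem banach_limit_attaining (V : CNormedSpace) (z0 : nat -> V) : bounded_seq z0 ->
  exists L, banach_limit L /\ Re (L z0) = upper_mean V z0.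
Proof.
  intro Hz.
  destruct (hahn_banach (nat -> V) sadd sscal (fun _ => vzero))
    with (D := @bounded_seq V) (p := upper_mean V) (z0 := z0)
    as [l [Hadd [Hsc [Hle Hz0]]]].
  - intros; apply seq_ext; intro; apply vadd_assoc.
  - intros; apply seq_ext; intro; apply vadd_comm.
  - intros; apply seq_ext; intro; apply vadd_0.
  - intros; apply seq_ext; intro; apply rscal_assoc.
  - intros; apply seq_ext; intro; apply rscal_1.
  - intros; apply seq_ext; intro; apply rscal_distr_v.
  - intros; apply seq_ext; intro; apply rscal_distr_c.
  - intros; apply seq_ext; intro; apply rscal_0.
  - apply bounded_add.
  - apply bounded_sscal.
  - apply upper_mean_add.
  - intros; apply upper_mean_sscal; auto.
  - exact Hz.
  - exists (complexify V l). split; [apply complexify_banach_limit; auto | exact Hz0].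
Qed.

Section Closedness.
Variable V : CNormedSpace.

Lemma Cmod_eq0 (z : Defs.C) : Cmod z = 0 -> z = C0.
Proof.
  destruct z as [a b]. unfold Cmod, C0; cbn [Re Im]. intro H.
  apply sqrt_eq_0 in H; [|nra]. f_equal; nra.
Qed.

Lemma banach_limit_tail L (d : nat -> V) k : banach_limit L -> bounded_seq d ->
  L (fun n => d (n + k)%nat) = L d.
Proof.
  intros [_ [_ [_ Lshift]]] Hd. induction k as [|k IH].
  - f_equal. apply seq_ext; intro n. f_equal. lia.
  - rewrite <- IH, <- (Lshift (fun n => d (n + k)%nat)).
    + f_equal. apply seq_ext; intro n. unfold shift. f_equal. lia.
    + destruct Hd as [B HB]. exists B; auto.
Qed.

(* Banach limits vanish on sequences tending to zero in norm: every tail is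
   small, and |L| is bounded by the sup norm of a tail. *)
Lemma banach_limit_null L (d : nat -> V) : banach_limit L -> bounded_seq d ->
  (forall eps, 0 < eps -> exists k, forall n, (k <= n)%nat -> vnorm (d n) <= eps) -> L d = C0.
Proof.
  intros HL Hd Hnull. apply Cmod_eq0, Rle_antisym; [|apply Cmod_nonneg].
  apply le_epsilon_of. intros eps He. destruct (Hnull eps He) as [k Hk].
  rewrite <- (banach_limit_tail L d k HL Hd).
  destruct HL as [_ [_ [Lbound _]]]. rewrite Rplus_0_l. apply Lbound.
  - destruct Hd as [B HB]. exists B; auto.
  - intro n. apply Hk. lia.
Qed.

(* A norm closed convex set is s.a.-sequentially closed: if the limit v were
   outside A it would be at distance eps > 0 from A, and a Banach limit whose
   real part attains the upper mean of v - x would give Re L (v - x) >= eps,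
   while strong almost convergence forces L (v - x) = 0. *)
Lemma closed_to_sa (A : V -> Prop) : convex A -> norm_closed A -> sa_seq_closed A.
Proof.
  intros HA HC x v Hx HAx Hsac. apply NNPP; intro Nv.
  destruct (HC v Nv) as [eps [He Hball]].
  assert (Hfar : forall a, A a -> eps <= vdist V v a).
  { intros a Ha. apply Rnot_lt_le. intro Hlt. apply (Hball a); auto. rewrite vdist_sym; auto. }
  set (u := sadd (const_seq V v) (sscal (-1) x)).
  pose proof (upper_mean_separation V A v x eps HA HAx Hfar Hx) as Hsep. fold u in Hsep.
  assert (Hmx : bounded_seq (sscal (-1) x)) by (apply bounded_sscal; auto).
  destruct (banach_limit_attaining V u) as [L [HL HLu]].
  { apply bounded_add; auto. apply bounded_const. }
  pose proof (Hsac L HL) as Hxv.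
  destruct HL as [Ladd [Lmul _]].
  assert (Hu : L u = Cadd (L (const_seq V v)) (Cmul (RtoC (-1)) (L x))).
  { rewrite <- Lmul by auto. apply Ladd; auto. apply bounded_const. }
  rewrite Hu, Hxv in HLu. unfold Cadd, Cmul, RtoC in HLu; cbn [Re Im] in HLu. lra.
Qed.

Lemma approximating_sequence (A : V -> Prop) (v : V) :
  (forall eps, 0 < eps -> exists w, vdist V w v < eps /\ A w) ->
  exists w : nat -> V, forall n, vdist V (w n) v < / (INR n + 1) /\ A (w n).
Proof.
  intro Happrox.
  assert (Hpos : forall n : nat, 0 < / (INR n + 1)).
  { intro n. apply Rinv_0_lt_compat. pose proof (pos_INR n). lra. }
  exists (fun n => epsilon (inhabits vzero) (fun w => vdist V w v < / (INR n + 1) /\ A w)).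
  intro n. apply epsilon_spec, Happrox, Hpos.
Qed.

(* An s.a.-sequentially closed set is norm closed: a sequence in A converging
   in norm to v converges strongly almost to v, since L (w - v~) = 0. *)
Lemma sa_to_closed (A : V -> Prop) : sa_seq_closed A -> norm_closed A.
Proof.
  intros Hsa v Nv. apply NNPP; intro Hnot.
  destruct (approximating_sequence A v) as [w Hw].
  { intros eps He. apply NNPP; intro Hn. apply Hnot. exists eps. split; auto.
    intros w Hdist Aw. apply Hn. exists w; auto. }
  assert (Hsmall : forall n, / (INR n + 1) <= 1).
  { intro n. pose proof (pos_INR n). rewrite <- Rinv_1. apply Rinv_le_contravar; lra. }
  set (d := fun n => vadd (w n) (vopp v)).
  assert (Hwd : w = fun n => vadd (d n) (const_seq V v n)).
  { apply seq_ext; intro n. unfold d, const_seq.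
    rewrite <- vadd_assoc, (vadd_comm (vopp v) v), vadd_opp, vadd_0. auto. }
  assert (Hd : bounded_seq d).
  { exists 1. intro n. pose proof (proj1 (Hw n)). pose proof (Hsmall n). unfold vdist in *. unfold d. lra. }
  assert (Hwb : bounded_seq w).
  { rewrite Hwd. apply (bounded_add V d (const_seq V v)); auto. apply bounded_const. }
  apply Nv, (Hsa w v Hwb (fun n => proj2 (Hw n))). intros L HL.
  assert (Hnull : L d = C0).
  { apply banach_limit_null; auto. intros eps He.
    destruct (INR_archimed eps 1 He) as [k Hk]. exists k. intros n Hn.
    pose proof (proj1 (Hw n)) as Hwn. unfold vdist in Hwn. fold (d n) in Hwn.
    assert (Hkn : INR k <= INR n) by (apply le_INR; auto).
    assert (/ (INR n + 1) <= eps).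
    { apply Rmult_le_reg_r with (INR n + 1); [pose proof (pos_INR n); lra|].
      rewrite Rinv_l by (pose proof (pos_INR n); lra). nra. }
    lra. }
  destruct HL as [Ladd _]. rewrite Hwd, Ladd, Hnull by (auto using bounded_const).
  destruct (L (const_seq V v)) as [a b]. unfold Cadd, C0; cbn [Re Im]. f_equal; ring.
Qed.

End Closedness.

Theorem mainTheorem16 (V : CNormedSpace) :
  (forall A : V -> Prop, convex A -> (norm_closed A <-> sa_seq_closed A)) /\
  (forall A : V -> Prop, linear_subspace A -> (norm_closed A <-> sa_seq_closed A)).
Proof.
  assert (Hconvex : forall A : V -> Prop, convex A -> (norm_closed A <-> sa_seq_closed A)).
  { intros A HA. split; [apply closed_to_sa; auto | apply sa_to_closed]. }
  split; auto.
  intros A [_ [Hadd Hscal]]. apply Hconvex.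
  intros x y t Hx Hy _. apply Hadd; apply Hscal; auto.
Qed.
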